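(* For all positive integers $h$ and $k$, \[ n^{\sharp}_h(k)=m^{\sharp}_h(k). \]
   Context: For integers $a<b$, $[a,b]=\{j\in\mathbf{Z}: a\le j\le b\}$ is an interval of integers. $hA=\{a_1+\cdots+a_h: a_i\in A\}$ (summands not necessarily distinct). For a nonempty finite $A\subseteq\mathbf{Z}$, $\ell^{\sharp}_h(A)$ is the largest integer $n\ge1$ with $[c,c+n]\subseteq hA$ for some $c\in\mathbf{Z}$ (undefined if $hA$ contains no interval). With $\mathcal{A}_X(k)=\{A\subseteq X:|A|=k\}$ and $\mathbf{N}_0=\{0,1,2,\ldots\}$: $n^{\sharp}_h(k)=\max\{\ell^{\sharp}_h(A):A\in\mathcal{A}_{\mathbf{N}_0}(k)\}$ and $m^{\sharp}_h(k)=\max\{\ell^{\sharp}_h(A):A\in\mathcal{A}_{\mathbf{Z}}(k)\}$, maxima taken over sets for which $\ell^{\sharp}_h(A)$ is defined. *)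

From Stdlib Require Import ZArith List.
Import ListNotations.
Open Scope Z_scope.

Definition in_sumset (h : nat) (A : list Z) (x : Z) : Prop :=
  exists l : list Z, length l = h /\ Forall (fun a => In a A) l /\
                     fold_right Z.add 0 l = x.

Definition has_interval (h : nat) (A : list Z) (n : Z) : Prop :=
  exists c : Z, forall j : Z, c <= j <= c + n -> in_sumset h A j.

(* lsharp_is h A n  <->  l#_h(A) is defined and equals n:
   n is the largest integer n >= 1 with [c,c+n] \subseteq hA for some c. *)
Definition lsharp_is (h : nat) (A : list Z) (n : Z) : Prop :=
  1 <= n /\ has_interval h A n /\
  (forall m : Z, 1 <= m -> has_interval h A m -> m <= n).

Definition kset_Z (k : nat) (A : list Z) : Prop := NoDup A /\ length A = k.
Definition kset_N0 (k : nat) (A : list Z) : Prop :=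
  kset_Z k A /\ Forall (fun a => 0 <= a) A.

(* n_sharp_is h k n <-> n#_h(k) is defined and equals n: n is the maximum of
   l#_h(A) over the k-subsets A of N_0 for which l#_h(A) is defined. *)
Definition n_sharp_is (h k : nat) (n : Z) : Prop :=
  (exists A, kset_N0 k A /\ lsharp_is h A n) /\
  (forall A n', kset_N0 k A -> lsharp_is h A n' -> n' <= n).

(* m_sharp_is h k n <-> m#_h(k) is defined and equals n (sets A \subseteq Z). *)
Definition m_sharp_is (h k : nat) (n : Z) : Prop :=
  (exists A, kset_Z k A /\ lsharp_is h A n) /\
  (forall A n', kset_Z k A -> lsharp_is h A n' -> n' <= n).

(* Proof: l#_h is invariant under translation, since translating A by t
   translates hA by h t; and every finite subset of Z has a translate inside
   N_0. Hence both maxima range over the same set of values. *)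
From Stdlib Require Import ZArith List Lia.
Import ListNotations.
Open Scope Z_scope.

Definition translate (t : Z) (A : list Z) : list Z := map (fun a => a + t) A.

Lemma translate_translate (s t : Z) (A : list Z) :
  translate s (translate t A) = translate (t + s) A.
Proof.
  unfold translate; rewrite map_map.
  apply map_ext; intros; lia.
Qed.

Lemma translate_0 (A : list Z) : translate 0 A = A.
Proof.
  unfold translate; rewrite <- (map_id A) at 2.
  apply map_ext; intros; lia.
Qed.

Lemma sum_translate (t : Z) (l : list Z) :
  fold_right Z.add 0 (translate t l) =
  fold_right Z.add 0 l + Z.of_nat (length l) * t.
Proof.
  induction l as [|a l IH]; cbn [translate map fold_right length]; [lia|].
  fold (translate t l); rewrite IH, Nat2Z.inj_succ; lia.
Qed.

Lemma in_sumset_translate (h : nat) (A : list Z) (x t : Z) :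
  in_sumset h A x -> in_sumset h (translate t A) (x + Z.of_nat h * t).
Proof.
  intros [l [Hlen [Hin Hsum]]].
  exists (translate t l); split; [|split].
  - unfold translate; rewrite length_map; exact Hlen.
  - apply Forall_map, (Forall_impl _ (fun a Ha => in_map (fun a => a + t) A a Ha)).
    exact Hin.
  - rewrite sum_translate, Hlen, Hsum; reflexivity.
Qed.

Lemma has_interval_translate (h : nat) (A : list Z) (n t : Z) :
  has_interval h A n -> has_interval h (translate t A) n.
Proof.
  intros [c Hc]; exists (c + Z.of_nat h * t); intros j Hj.
  replace j with ((j - Z.of_nat h * t) + Z.of_nat h * t) by lia.
  apply in_sumset_translate, Hc; lia.
Qed.

Lemma has_interval_translate_iff (h : nat) (A : list Z) (n t : Z) :
  has_interval h (translate t A) n <-> has_interval h A n.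
Proof.
  split; [|apply has_interval_translate].
  intros Ht; apply (has_interval_translate _ _ _ (- t)) in Ht.
  rewrite translate_translate, Z.add_opp_diag_r, translate_0 in Ht.
  exact Ht.
Qed.

Lemma lsharp_is_translate (h : nat) (A : list Z) (n t : Z) :
  lsharp_is h A n -> lsharp_is h (translate t A) n.
Proof.
  intros [Hn [Hint Hmax]]; split; [exact Hn|split].
  - apply has_interval_translate, Hint.
  - intros m Hm; rewrite has_interval_translate_iff; apply Hmax, Hm.
Qed.

Lemma kset_Z_translate (k : nat) (A : list Z) (t : Z) :
  kset_Z k A -> kset_Z k (translate t A).
Proof.
  intros [Hnd Hlen]; split.
  - apply NoDup_map_NoDup_ForallPairs; [|exact Hnd].
    intros x y _ _ E; lia.
  - unfold translate; rewrite length_map; exact Hlen.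
Qed.

Lemma translate_nonneg_exists (A : list Z) :
  exists t, Forall (fun a => 0 <= a) (translate t A).
Proof.
  induction A as [|b A [t Ht]]; [exists 0; constructor|].
  exists (Z.max t (- b)); constructor; [lia|].
  unfold translate in Ht; rewrite Forall_map in Ht.
  apply Forall_map; refine (Forall_impl _ _ Ht); intros; lia.
Qed.

Lemma kset_Z_translate_N0 (h k : nat) (A : list Z) (n : Z) :
  kset_Z k A -> lsharp_is h A n -> exists B, kset_N0 k B /\ lsharp_is h B n.
Proof.
  intros HA Hn; destruct (translate_nonneg_exists A) as [t Ht].
  exists (translate t A); split; [split|].
  - apply kset_Z_translate, HA.
  - exact Ht.
  - apply lsharp_is_translate, Hn.
Qed.

Theorem mainTheorem6 (h k : nat) (hh : (1 <= h)%nat) (hk : (1 <= k)%nat) :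
  forall n : Z, n_sharp_is h k n <-> m_sharp_is h k n.
Proof.
  intros n; split; intros [[A [HA Hn]] Hmax]; split.
  - exists A; split; [apply HA|exact Hn].
  - intros B m HB Hm.
    destruct (kset_Z_translate_N0 h k B m HB Hm) as [C [HC HCm]].
    exact (Hmax C m HC HCm).
  - exact (kset_Z_translate_N0 h k A n HA Hn).
  - intros B m HB Hm; exact (Hmax B m (proj1 HB) Hm).
Qed.
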